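(* Let $G$ be a group acting on a set $X$, let $A,B$ be nonempty finite subsets of $G$ and $Y$ a finite subset of $X$. Then \[|AB\cdot Y|^{2}\leq|AB|\,|B\cdot Y|\,\max_{b\in B}|Ab\cdot Y|.\] In particular, when every element of $A$ commutes with every element of $B$, \[|AB\cdot Y|^{2}\leq|AB|\,|B\cdot Y|\,|A\cdot Y|.\]
   Context: $AB=\{ab\mid a\in A,b\in B\}$, $Ab=\{ab\mid a\in A\}$, and for $S\subset G$, $S\cdot Y=\{s\cdot y\mid s\in S, y\in Y\}$. *)

From mathcomp Require Import all_boot.
From mathcomp Require Export finmap.
Set Implicit Arguments. Unset Strict Implicit. Unset Printing Implicit Defensive.
Open Scope fset_scope.

Record group_action (G X : choiceType) := GroupAction {
  gmul : G -> G -> G;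
  gone : G;
  ginv : G -> G;
  gmulA : associative gmul;
  gmul1 : left_id gone gmul;
  gmulV : left_inverse gone ginv gmul;
  act : G -> X -> X;
  act1 : forall x, act gone x = x;
  actM : forall g h x, act (gmul g h) x = act g (act h x)
}.

Definition setmul (G X : choiceType) (ga : group_action G X) (A B : {fset G}) : {fset G} :=
  [fset gmul ga a b | a in A, b in B].

Definition setact (G X : choiceType) (ga : group_action G X) (S : {fset G}) (Y : {fset X}) : {fset X} :=
  [fset act ga s y | s in S, y in Y].

(* Give each point x of AB.Y to the first b in B (in the enumeration order of
   B) with x in Ab.Y, and let P_b be the set of points given to b.  Then
   P_b lies in {ab.y | a in A_b, y in Y_b}, where A_b and Y_b collect the a
   and y that occur, and the choice of the first b makes the sets A_b b
   pairwise disjoint inside AB and the sets b.Y_b pairwise disjoint inside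
   B.Y.  As |P_b|^2 <= |Ab.Y| |A_b| |Y_b|, Cauchy-Schwarz gives
   |AB.Y|^2 <= (sum_b |P_b|)^2 <= max_b |Ab.Y| (sum_b |A_b|) (sum_b |Y_b|).
   When A and B commute, Ab.Y = b.(A.Y). *)

From mathcomp Require Import all_boot finmap zify.
Set Implicit Arguments. Unset Strict Implicit. Unset Printing Implicit Defensive.
Open Scope fset_scope.

Lemma leq_cross_term (M u v p q r s : nat) :
  u ^ 2 <= M * (p * q) -> v ^ 2 <= M * (r * s) ->
  2 * (u * v) <= M * (p * s + r * q).
Proof.
move=> le_u le_v; rewrite -leq_sqr.
have := (nat_AGM2 (p * s) (r * q)).1.
nia.
Qed.

Lemma leq_sqr_sum (I : eqType) (r : seq I) (M : nat) (u p q : I -> nat) :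
  {in r, forall i, u i ^ 2 <= M * (p i * q i)} ->
  (\sum_(i <- r) u i) ^ 2 <= M * ((\sum_(i <- r) p i) * (\sum_(i <- r) q i)).
Proof.
elim: r => [|i r IHr] le_u; first by rewrite !big_nil.
rewrite !big_cons.
have le_ui := le_u i (mem_head i r).
have le_ur := IHr (fun j rj => le_u j (mem_behead (s := i :: r) rj)).
have := leq_cross_term le_ui le_ur.
nia.
Qed.

Section FsetCounting.
Variables (I T : choiceType).

Lemma leq_card_bigfcup (r : seq I) (F : I -> {fset T}) :
  #|` \bigcup_(i <- r) F i| <= \sum_(i <- r) #|` F i|.
Proof.
elim/big_rec2: _ => [|i n U _ le_Un]; first by rewrite cardfs0.
by rewrite (leq_trans (leq_card_fsetU _ _).1) ?leq_add2l.
Qed.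

Lemma leq_sum_card_disjoint (K : {fset I}) (F : I -> {fset T}) (S : {fset T}) :
  {in K &, forall i j, i != j -> [disjoint F i & F j]} ->
  {in K, forall i, F i `<=` S} ->
  \sum_(i <- K) #|` F i| <= #|` S|.
Proof.
move=> disjF subFS.
have -> : \sum_(i <- K) #|` F i| = #|` \bigcup_(i <- K) F i|.
  rewrite card_fset_sum1 partition_disjoint_bigfcup //.
  by apply: eq_bigr => i _; rewrite -card_fset_sum1.
by apply/fsubset_leq_card/bigfcupsP => i iK _; apply: subFS.
Qed.

Lemma leq_card_imfset2 (J : choiceType) (f : I -> J -> T)
    (A : {fset I}) (B : {fset J}) :
  #|` [fset f a b | a in A, b in B]| <= #|` A| * #|` B|.
Proof.
have -> : [fset f a b | a in A, b in B] = \bigcup_(a <- A) [fset f a b | b in B].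
  apply/fsetP => x; apply/imfset2P/bigfcupP.
    by move=> [a aA [b bB ->]]; exists a; rewrite ?aA ?in_imfset.
  by move=> [a /andP [aA _] /imfsetP [b bB ->]]; exists a => //; exists b.
apply: leq_trans (leq_card_bigfcup _ _) _.
rewrite card_fset_sum1 big_distrl /=; apply: leq_sum => a _.
by rewrite mul1n leq_imfset_card.
Qed.

End FsetCounting.

Section GroupAction.
Variables (G X : choiceType) (ga : group_action G X).
Implicit Types (a b c g : G) (x y : X) (A B : {fset G}) (Y : {fset X}).

Lemma gmulrV g : gmul ga g (ginv ga g) = gone ga.
Proof.
rewrite -[LHS](gmul1 ga) -(gmulV ga (ginv ga g)) -gmulA.
by rewrite (gmulA ga (ginv ga g)) gmulV gmul1.
Qed.

Lemma gmulr1 g : gmul ga g (gone ga) = g.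
Proof. by rewrite -(gmulV ga g) gmulA gmulrV gmul1. Qed.

Lemma gmulIg b : injective (gmul ga ^~ b).
Proof.
by move=> a a' eq_ab; rewrite -(gmulr1 a) -(gmulr1 a') -(gmulrV b) !gmulA eq_ab.
Qed.

Lemma act_inj g : injective (act ga g).
Proof.
by move=> x x' eq_gx; rewrite -(act1 ga x) -(act1 ga x') -(gmulV ga g) !actM eq_gx.
Qed.

Lemma setmulP A B c :
  reflect (exists2 a, a \in A & exists2 b, b \in B & c = gmul ga a b)
          (c \in setmul ga A B).
Proof. exact: imfset2P. Qed.

Lemma setactP A Y x :
  reflect (exists2 g, g \in A & exists2 y, y \in Y & x = act ga g y)
          (x \in setact ga A Y).
Proof. exact: imfset2P. Qed.

Lemma setact_mul1P A Y b x :
  reflect (exists2 a, a \in A & exists2 y, y \in Y & x = act ga (gmul ga a b) y)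
          (x \in setact ga (setmul ga A [fset b]) Y).
Proof.
apply: (iffP (setactP _ _ _)).
  by move=> [_ /setmulP [a aA [_ /fset1P -> ->]] [y yY ->]]; exists a => //; exists y.
move=> [a aA [y yY ->]]; exists (gmul ga a b); last by exists y.
by apply/setmulP; exists a => //; exists b; rewrite ?fset11.
Qed.

Lemma card_setact_mul1_commute A Y b :
  {in A, forall a, gmul ga a b = gmul ga b a} ->
  #|` setact ga (setmul ga A [fset b]) Y| <= #|` setact ga A Y|.
Proof.
move=> commb.
apply: (@leq_trans #|` [fset act ga b x | x in setact ga A Y]|); last first.
  exact: leq_imfset_card.
apply/fsubset_leq_card/fsubsetP => _ /setact_mul1P [a aA [y yY ->]].
apply/imfsetP; exists (act ga a y); last by rewrite /= commb // actM.
by apply/setactP; exists a => //; exists y.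
Qed.

Section Slices.
Variables (A B : {fset G}) (Y : {fset X}).

Local Notation slice b := (setact ga (setmul ga A [fset b]) Y).

(* Equal to [size B] when x lies in no slice. *)
Definition first_slice x := find (fun b => x \in slice b) B.

Definition assigned a b y := first_slice (act ga (gmul ga a b) y) == index b B.

Definition piece b :=
  [fset x in setact ga (setmul ga A B) Y | first_slice x == index b B].

Definition left_part b := [fset a in A | has (assigned a b) Y].

Definition right_part b := [fset y in Y | has (fun a => assigned a b y) A].

Lemma first_slice_le x b : b \in B -> x \in slice b -> first_slice x <= index b B.
Proof.
move=> bB xb; rewrite leqNgt; apply/negP => /(before_find b).
by rewrite nth_index // xb.
Qed.

Lemma first_sliceP x : x \in setact ga (setmul ga A B) Y ->
  exists2 b, b \in B & first_slice x = index b B /\ x \in slice b.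
Proof.
move=> /setactP [_ /setmulP [a aA [b bB ->]] [y yY ex]].
have has_x : has (fun b => x \in slice b) B.
  by apply/hasP; exists b => //; apply/setact_mul1P; exists a => //; exists y.
have lt_x : first_slice x < size B by rewrite /first_slice -has_find.
exists (nth b B (first_slice x)); first exact: mem_nth.
by rewrite index_uniq ?fset_uniq //; split=> //; apply: (nth_find b has_x).
Qed.

Lemma first_slice_exchange b b' x x' : b \in B -> b' \in B ->
  first_slice x = index b B -> first_slice x' = index b' B ->
  x \in slice b' -> x' \in slice b -> b = b'.
Proof.
move=> bB b'B fx fx' xb' x'b; apply: (index_inj b bB b'B); apply/anti_leq/andP.
by split; [rewrite -fx | rewrite -fx']; apply: first_slice_le.
Qed.

Lemma piece_sub_slice b : b \in B -> piece b `<=` slice b.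
Proof.
move=> bB; apply/fsubsetP => x; rewrite inE => /andP [/first_sliceP [b' b'B [fx xb']]].
by rewrite fx => /eqP /(index_inj b b'B bB) <-.
Qed.

Lemma piece_sub_parts b : b \in B ->
  piece b `<=` [fset act ga (gmul ga a b) y | a in left_part b, y in right_part b].
Proof.
move=> bB; apply/fsubsetP => x xb.
have /setact_mul1P [a aA [y yY ex]] := fsubsetP (piece_sub_slice bB) x xb.
have aby : assigned a b y by move: xb; rewrite inE ex => /andP [].
apply/imfset2P; exists a; first by rewrite !inE aA; apply/hasP; exists y.
by exists y; rewrite // !inE yY; apply/hasP; exists a.
Qed.

Lemma card_piece b : b \in B ->
  #|` piece b| ^ 2
  <= (\max_(b' <- B) #|` slice b'|) * (#|` left_part b| * #|` right_part b|).
Proof.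
move=> bB; rewrite -mulnn; apply: leq_mul.
  apply: leq_trans (leq_bigmax_seq _ bB isT).
  exact/fsubset_leq_card/piece_sub_slice.
apply: leq_trans (leq_card_imfset2 _ _ _).
exact/fsubset_leq_card/piece_sub_parts.
Qed.

Lemma card_setact_mul_le_sum :
  #|` setact ga (setmul ga A B) Y| <= \sum_(b <- B) #|` piece b|.
Proof.
apply: leq_trans (leq_card_bigfcup _ _); apply/fsubset_leq_card/fsubsetP => x xU.
have [b bB [fx _]] := first_sliceP xU.
by apply/bigfcupP; exists b; rewrite ?bB // !inE fx eqxx andbT.
Qed.

Lemma sum_card_left_part : \sum_(b <- B) #|` left_part b| <= #|` setmul ga A B|.
Proof.
have -> : \sum_(b <- B) #|` left_part b|
          = \sum_(b <- B) #|` [fset gmul ga a b | a in left_part b]|.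
  apply: eq_bigr => b _; rewrite [RHS]card_in_imfset //= => a a' _ _.
  exact: gmulIg.
apply: leq_sum_card_disjoint => [b b' bB b'B neq_bb' | b bB].
  apply/fdisjointP => _ /imfsetP [a /= ab ->]; apply: contra neq_bb'.
  move=> /imfsetP [a' /= ab' eq_ab]; apply/eqP.
  move: ab ab'; rewrite !inE => /andP [aA /hasP [y yY /eqP fx]].
  move=> /andP [a'A /hasP [y' y'Y /eqP fx']].
  apply: (first_slice_exchange bB b'B fx fx'); apply/setact_mul1P.
    by exists a' => //; exists y; rewrite // eq_ab.
  by exists a => //; exists y'; rewrite // eq_ab.
apply/fsubsetP => _ /imfsetP [a /= ab ->]; apply/setmulP.
by exists a; [move: ab; rewrite inE => /andP [] | exists b].
Qed.

Lemma sum_card_right_part : \sum_(b <- B) #|` right_part b| <= #|` setact ga B Y|.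
Proof.
have -> : \sum_(b <- B) #|` right_part b|
          = \sum_(b <- B) #|` [fset act ga b y | y in right_part b]|.
  apply: eq_bigr => b _; rewrite [RHS]card_in_imfset //= => y y' _ _.
  exact: act_inj.
apply: leq_sum_card_disjoint => [b b' bB b'B neq_bb' | b bB].
  apply/fdisjointP => _ /imfsetP [y /= yb ->]; apply: contra neq_bb'.
  move=> /imfsetP [y' /= yb' eq_by]; apply/eqP.
  move: yb yb'; rewrite !inE => /andP [yY /hasP [a aA /eqP fx]].
  move=> /andP [y'Y /hasP [a' a'A /eqP fx']].
  apply: (first_slice_exchange bB b'B fx fx'); apply/setact_mul1P.
    by exists a => //; exists y'; rewrite // !actM eq_by.
  by exists a' => //; exists y; rewrite // !actM eq_by.
apply/fsubsetP => _ /imfsetP [y /= yb ->]; apply/setactP.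
by exists b => //; exists y => //; move: yb; rewrite inE => /andP [].
Qed.

Theorem card_setact_mul_sqr :
  #|` setact ga (setmul ga A B) Y| ^ 2
  <= #|` setmul ga A B| * #|` setact ga B Y| * \max_(b <- B) #|` slice b|.
Proof.
apply: (@leq_trans ((\sum_(b <- B) #|` piece b|) ^ 2)).
  by rewrite leq_sqr card_setact_mul_le_sum.
apply: leq_trans (leq_sqr_sum card_piece) _.
by rewrite mulnC leq_mul // leq_mul // ?sum_card_left_part ?sum_card_right_part.
Qed.

End Slices.
End GroupAction.

Theorem mainTheorem4 (G X : choiceType) (ga : group_action G X)
    (A B : {fset G}) (Y : {fset X}) (hA : A != fset0) (hB : B != fset0) :
  (#|` setact ga (setmul ga A B) Y| ^ 2 <=
     #|` setmul ga A B| * #|` setact ga B Y|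
       * \max_(b <- B) #|` setact ga (setmul ga A [fset b]) Y|)%N
  /\
  ((forall a b, a \in A -> b \in B -> gmul ga a b = gmul ga b a) ->
   (#|` setact ga (setmul ga A B) Y| ^ 2 <=
     #|` setmul ga A B| * #|` setact ga B Y| * #|` setact ga A Y|)%N).
Proof.
split=> [|commAB]; first exact: card_setact_mul_sqr.
apply: leq_trans (card_setact_mul_sqr ga A B Y) _; rewrite leq_mul //.
apply/bigmax_leqP_seq => b bB _; apply: card_setact_mul1_commute => a aA.
exact: commAB.
Qed.
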